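(* For every integer $m\ge2$, let $\rho_m=\sin^{-2}\frac{\pi}{2m}$. Then $\frac{\rho_m}{2}$ is an algebraic integer. *)

From mathcomp Require Import all_boot all_order all_algebra.
From mathcomp Require Import all_classical all_reals all_analysis.
Set Implicit Arguments. Unset Strict Implicit. Unset Printing Implicit Defensive.
Import Order.TTheory GRing.Theory Num.Theory.
Local Open Scope ring_scope.

Definition algebraic_integer (R : realType) (x : R) : Prop :=
  integralOver (fun z : int => z%:~R : R) x.

Definition rho (R : realType) (m : nat) : R :=
  (sin (pi / (2 * m%:R)))^-2.

From mathcomp Require Import all_boot all_order all_algebra.
From mathcomp Require Import all_classical all_reals all_analysis.
From mathcomp Require Import ring lra.
Import Order.TTheory GRing.Theory Num.Theory.
Local Open Scope ring_scope.

(* Put theta = pi / (2m) and x = rho_m / 2 = 1 / (1 - cos (2 theta)), so that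
   x cos (2 theta) = x - 1.  Then u_k = x^k cos (phi + 2 k theta) satisfies
   u_(k+2) = 2 (x - 1) u_(k+1) - x^2 u_k, hence u_k = P_k(x) u_0 for the monic
   integer polynomials P_k = rec_poly c k of degree k, as soon as
   u_1 = (x - c) u_0.  With phi = 0 when m is even and phi = theta when m is
   odd, and k = m / 2, one has phi + 2 k theta = pi / 2: thus u_k = 0 while
   u_0 <> 0, and x is a root of P_k. *)

Fixpoint rec_poly (c : int) (k : nat) : {poly int} :=
  match k with
  | 0 => 1
  | 1 => 'X - c%:P
  | (k'.+1 as k1).+1 => ('X - 1) * rec_poly c k1 *+ 2 - 'X^2 * rec_poly c k'
  end.

Lemma rec_polySS c k :
  rec_poly c k.+2 = ('X - 1) * rec_poly c k.+1 *+ 2 - 'X^2 * rec_poly c k.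
Proof. by []. Qed.

Lemma coef_rec_step (R : nzRingType) (p q : {poly R}) i :
  (('X - 1) * q *+ 2 - 'X^2 * p)`_i.+2 = (q`_i.+1 - q`_i.+2) *+ 2 - p`_i.
Proof. by rewrite coefB coefMn mulrBl mul1r coefB coefXM coefXnM !subSS subn0. Qed.

Lemma rec_poly_size_coef c k :
  (size (rec_poly c k) <= k.+1)%N /\ (rec_poly c k)`_k = 1.
Proof.
elim/ltn_ind: k => -[|[|k]] IH.
- by rewrite /= size_poly1 coefC.
- by rewrite /= size_XsubC coefB coefX coefC subr0.
have [/leq_sizeP szk ck] := IH k (ltnW (ltnSn _)).
have [/leq_sizeP szk1 ck1] := IH k.+1 (ltnSn _).
rewrite rec_polySS coef_rec_step ck ck1 szk1 // subr0 mulr2n addrK; split=> //.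
apply/leq_sizeP => -[|[|j]] // hj; rewrite coef_rec_step.
by rewrite !szk1 ?szk ?subrr ?mul0rn ?subr0 // ltnW.
Qed.

Lemma rec_poly_monic c k : rec_poly c k \is monic.
Proof.
have [szk ck] := rec_poly_size_coef c k.
have sz : size (rec_poly c k) = k.+1.
  apply/eqP; rewrite eqn_leq szk ltnNge; apply/negP => /leq_sizeP/(_ k (leqnn k)).
  by rewrite ck => /eqP; rewrite oner_eq0.
by rewrite monicE lead_coefE sz /= ck.
Qed.

Lemma horner_rec_polySS (R : comNzRingType) (x : R) c k :
  (map_poly intr (rec_poly c k.+2)).[x] =
  (x - 1) * (map_poly intr (rec_poly c k.+1)).[x] *+ 2
  - x ^+ 2 * (map_poly intr (rec_poly c k)).[x].
Proof.
rewrite rec_polySS; move: (rec_poly c k.+1) (rec_poly c k) => q p.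
by rewrite rmorphB rmorphMn !rmorphM /= rmorphB /= map_polyX rmorph1 !hornerE.
Qed.

Lemma cosD_add_cosB {R : realType} (a b : R) :
  cos (a + b) + cos (a - b) = (cos a * cos b) *+ 2.
Proof. rewrite cosD cosB; ring. Qed.

Section CosineProgression.
Context {R : realType} {x theta : R} (hx : x * cos (theta *+ 2) = x - 1).

Lemma cos_progression_rec phi k :
  x ^+ k.+2 * cos (phi + theta *+ (2 * k.+2)) =
  (x - 1) * (x ^+ k.+1 * cos (phi + theta *+ (2 * k.+1))) *+ 2
  - x ^+ 2 * (x ^+ k * cos (phi + theta *+ (2 * k))).
Proof.
set a := phi + theta *+ (2 * k.+1).
have -> : phi + theta *+ (2 * k.+2) = a + theta *+ 2.
  by rewrite /a !mulnS !mulrnDr; ring.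
have -> : phi + theta *+ (2 * k) = a - theta *+ 2.
  by rewrite /a !mulnS !mulrnDr; ring.
have -> : cos (a + theta *+ 2) = (cos a * cos (theta *+ 2)) *+ 2 - cos (a - theta *+ 2).
  by rewrite -cosD_add_cosB addrK.
rewrite -hx !exprS; ring.
Qed.

Lemma horner_rec_poly_cos phi c k :
  (x - c%:~R) * cos phi = x * cos (phi + theta *+ 2) ->
  (map_poly intr (rec_poly c k)).[x] * cos phi =
  x ^+ k * cos (phi + theta *+ (2 * k)).
Proof.
move=> hphi; elim/ltn_ind: k => -[|[|k]] IH.
- by rewrite /= rmorph1 hornerC mul1r expr0 mul1r mulr0n addr0.
- by rewrite [rec_poly c 1]/= map_polyXsubC hornerXsubC expr1 muln1 hphi.
rewrite horner_rec_polySS cos_progression_rec -IH // -IH //; ring.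
Qed.

Lemma cos_triple : (x - 2%:~R) * cos theta = x * cos (theta + theta *+ 2).
Proof.
have := cosD_add_cosB (theta *+ 2) theta.
rewrite mulr2n addrK [theta + theta + theta]addrC -mulr2n => e.
have -> : cos (theta + theta *+ 2) = (cos (theta *+ 2) * cos theta) *+ 2 - cos theta.
  by rewrite -e addrK.
rewrite mulrBr mulrnAr mulrA hx; ring.
Qed.

Lemma algebraic_integer_of_cos_zero phi c k :
  (x - c%:~R) * cos phi = x * cos (phi + theta *+ 2) -> cos phi != 0 ->
  cos (phi + theta *+ (2 * k)) = 0 -> algebraic_integer x.
Proof.
move=> hphi cos_phi_neq0 cos_k0; exists (rec_poly c k); first exact: rec_poly_monic.
apply/rootP; have := horner_rec_poly_cos _ _ k hphi.
by rewrite cos_k0 mulr0 => /eqP; rewrite mulf_eq0 (negPf cos_phi_neq0) orbF => /eqP.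
Qed.

End CosineProgression.

Theorem lemma4p1 (R : realType) (m : nat) (hm : (2 <= m)%N) :
  algebraic_integer (rho R m / 2).
Proof.
rewrite /rho; set theta := pi / (2 * m%:R); set x := (sin theta)^-2 / 2.
have m_ge2 : 2 <= m%:R :> R by rewrite (ler_nat R 2).
have m_gt0 : 0 < m%:R :> R by rewrite (lt_le_trans _ m_ge2).
have theta_m : theta * m%:R = pi / 2 by rewrite /theta; field; rewrite gt_eqF.
have theta_gt0 : 0 < theta by rewrite divr_gt0 ?pi_gt0 ?mulr_gt0.
have theta_lt : theta < pi / 2 by nra.
have cos_m : cos (theta *+ m) = 0 by rewrite -mulr_natr theta_m cos_pihalf.
have hx : x * cos (theta *+ 2) = x - 1.
  have : sin theta != 0 by rewrite gt_eqF // sin_gt0_pihalf ?theta_gt0.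
  by rewrite /x cos_mulr2n cos2sin2 => ?; field.
have m_half := odd_double_half m.
case: (odd m) m_half => /= m_half.
- apply: (algebraic_integer_of_cos_zero hx _ _ m./2 (cos_triple hx)).
    rewrite gt_eqF // cos_gt0_pihalf // theta_lt andbT.
    by rewrite (lt_trans _ theta_gt0) // oppr_lt0 divr_gt0 ?pi_gt0.
  by rewrite mul2n -mulrS -(add1n m./2.*2) m_half.
- apply: (algebraic_integer_of_cos_zero hx 0 1 m./2).
  + by rewrite cos0 mulr1 add0r hx.
  + by rewrite cos0 oner_neq0.
  by rewrite add0r mul2n -(add0n m./2.*2) m_half.
Qed.
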